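(* Let $(G,f)\in\mathcal C$ with $|V(G)|=\aleph_0$. If $P$ is a hereditary property and $P(G,f)$ holds, then $G$ possesses a perfect $f$-factor.
   Context: A graph is $G=(V,E)$ with $V$ a nonempty set and $E\subseteq\{e\subseteq V:|e|=2\}$. For $F\subseteq E$ and $x\in V$, $d_F(x)$ is the cardinal $|\{e\in F:x\in e\}|$. For $f:V\to$ Cardinals, an $f$-factor of $G$ is $F\subseteq E$ with $d_F(x)\le f(x)$ for all $x$; it is perfect if $d_F(x)=f(x)$ for all $x$. $\mathcal C$ is the class of all pairs $(G,f)$ with $G=(V,E)$ a graph, $f:V\to$ Cardinals, and $f(x)\le d_E(x)$ for all $x\in V$. A property $P$ is a class of pairs; $P(G,f)$ means that $(G,f)\in\mathcal C$ and $(G,f)$ has property $P$. For $x,y\in V$, $G-\{x,y\}$ denotes $(V,E\setminus\{\{x,y\}\})$, and $f_{x,y}(v)=f(v)-1$ if $v\in\{x,y\}$ and $1\le f(v)<\aleph_0$, $f_{x,y}(v)=f(v)$ otherwise. $P$ is hereditary if for every $(G,f)$ with $P(G,f)$ and every $x\in V(G)$ with $f(x)>0$ there is $y\in V(G)$ with $f(y)>0$, $\{x,y\}\in E(G)$ and $P(G-\{x,y\},f_{x,y})$. *)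

From Stdlib Require Import List ClassicalEpsilon.
Import ListNotations.
Set Implicit Arguments.

(* Cardinals that can occur as degrees in a graph with countably many
   vertices: finite cardinals n, and aleph_0 (Inf). *)
Inductive card : Type := Fin (n : nat) | Inf.

Definition card_le (a b : card) : Prop :=
  match a, b with
  | Fin m, Fin n => m <= n
  | _, Inf => True
  | Inf, Fin _ => False
  end.

Section Graphs.
Variable V : Type.

Definition is_graph (E : V -> V -> Prop) : Prop :=
  (forall x y, E x y -> E y x) /\ (forall x, ~ E x x).

Definition edge_subset (F E : V -> V -> Prop) : Prop :=
  (forall x y, F x y -> F y x) /\ (forall x y, F x y -> E x y).

Definition has_deg (F : V -> V -> Prop) (x : V) (c : card) : Prop :=
  match c with
  | Fin n => exists l : list V, NoDup l /\ length l = n /\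
               (forall y, F x y <-> In y l)
  | Inf => ~ (exists l : list V, forall y, F x y -> In y l)
  end.

Definition inC (E : V -> V -> Prop) (f : V -> card) : Prop :=
  is_graph E /\ forall x, exists c, has_deg E x c /\ card_le (f x) c.

Definition holds (P : (V -> V -> Prop) -> (V -> card) -> Prop)
  (E : V -> V -> Prop) (f : V -> card) : Prop := inC E f /\ P E f.

Definition remove_edge (E : V -> V -> Prop) (x y : V) : V -> V -> Prop :=
  fun u v => E u v /\ ~ ((u = x /\ v = y) \/ (u = y /\ v = x)).

Definition card_pred (c : card) : card :=
  match c with
  | Fin (S n) => Fin n
  | c' => c'
  end.

Definition f_dec (f : V -> card) (x y : V) : V -> card :=
  fun v => if excluded_middle_informative (v = x \/ v = y)
           then card_pred (f v) else f v.

Definition hereditary (P : (V -> V -> Prop) -> (V -> card) -> Prop) : Prop :=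
  forall (E : V -> V -> Prop) (f : V -> card), holds P E f ->
  forall x, f x <> Fin 0 ->
  exists y, f y <> Fin 0 /\ E x y /\ holds P (remove_edge E x y) (f_dec f x y).

Definition countably_infinite : Prop :=
  exists g : nat -> V, (forall m n, g m = g n -> m = n) /\ (forall v, exists n, g n = v).

End Graphs.

(* Enumerate V along a schedule that visits every vertex infinitely often and
   run a greedy process: when the scheduled vertex x still has positive residual
   demand, heredity supplies a neighbour y such that P survives deleting the
   edge xy and decrementing the demands of x and y; record xy as chosen.  The
   chosen edges at v plus the residual demand of v always add up to f(v).  A
   vertex with finite demand is visited until its demand is exhausted, and is
   never touched again afterwards; a vertex with infinite demand keeps it forever
   and so gains a new chosen edge at each visit.  The union of all chosen edges
   is therefore a perfect f-factor. *)

From Stdlib Require Import List ClassicalEpsilon Classical Lia Arith Cantor.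
Import ListNotations.
Set Implicit Arguments.

Section EdgeLists.
Variable V : Type.

Definition edges_of (L : list (V * V)) (u v : V) : Prop := In (u, v) L \/ In (v, u) L.

Lemma edges_of_cons x y L u v :
  edges_of ((x, y) :: L) u v <-> (u = x /\ v = y) \/ (u = y /\ v = x) \/ edges_of L u v.
Proof.
  unfold edges_of; simpl; split.
  - intros [[e|h]|[e|h]]; try (injection e as -> ->); tauto.
  - intros [[-> ->]|[[-> ->]|[h|h]]]; tauto.
Qed.

(* Each occurrence of v in an edge of L contributes the other endpoint, so a
   loop (v, v) would contribute v twice. *)
Fixpoint neighbours (v : V) (L : list (V * V)) : list V :=
  match L with
  | [] => []
  | (a, b) :: L' =>
      (if excluded_middle_informative (v = a) then [b] else []) ++
      (if excluded_middle_informative (v = b) then [a] else []) ++ neighbours v L'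
  end.

Lemma in_neighbours v L y : In y (neighbours v L) <-> edges_of L v y.
Proof.
  induction L as [|[a b] L IH]; [unfold edges_of; simpl; tauto|].
  rewrite edges_of_cons, <- IH; simpl.
  destruct (excluded_middle_informative (v = a)), (excluded_middle_informative (v = b));
    simpl; rewrite ?in_app_iff; simpl; split; intuition congruence.
Qed.

Lemma neighbours_app v L M : neighbours v (L ++ M) = neighbours v L ++ neighbours v M.
Proof.
  induction L as [|[a b] L IH]; simpl; [reflexivity|].
  rewrite IH, !app_assoc; reflexivity.
Qed.

Lemma length_neighbours_cons_self x y L :
  S (length (neighbours x L)) <= length (neighbours x ((x, y) :: L)).
Proof.
  simpl; destruct (excluded_middle_informative (x = x)) as [_|]; [|congruence].
  destruct (excluded_middle_informative (x = y)); simpl; lia.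
Qed.

Lemma length_neighbours_cons x y L v : x <> y ->
  length (neighbours v ((x, y) :: L)) =
  (if excluded_middle_informative (v = x \/ v = y) then 1 else 0) + length (neighbours v L).
Proof.
  intro xy; simpl.
  destruct (excluded_middle_informative (v = x)), (excluded_middle_informative (v = y)),
    (excluded_middle_informative (v = x \/ v = y)); simpl; intuition congruence.
Qed.

Lemma NoDup_neighbours_cons x y L : x <> y -> ~ edges_of L x y ->
  (forall v, NoDup (neighbours v L)) -> forall v, NoDup (neighbours v ((x, y) :: L)).
Proof.
  intros xy fresh nodup v; simpl.
  destruct (excluded_middle_informative (v = x)) as [vx|vx];
    destruct (excluded_middle_informative (v = y)) as [vy|vy]; simpl; subst;
    try congruence.
  - constructor; [rewrite in_neighbours|]; auto.
  - constructor; [rewrite in_neighbours; unfold edges_of in *; tauto|auto].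
  - auto.
Qed.

End EdgeLists.

Definition card_add (c : card) (n : nat) : card :=
  match c with Fin m => Fin (m + n) | Inf => Inf end.

Lemma card_add_pred_succ c n : c <> Fin 0 -> card_add (card_pred c) (S n) = card_add c n.
Proof. destruct c as [[|m]|]; simpl; intro; [congruence|f_equal; lia|reflexivity]. Qed.

Definition fair_schedule (V : Type) (g : nat -> V) (k : nat) : V := g (fst (Cantor.of_nat k)).

Lemma fair_schedule_recurrent (V : Type) (g : nat -> V) i K :
  exists k, K <= k /\ fair_schedule g k = g i.
Proof.
  exists (Cantor.to_nat (i, K)); split.
  - pose proof (Cantor.to_nat_non_decreasing i K); lia.
  - unfold fair_schedule; rewrite Cantor.cancel_of_to; reflexivity.
Qed.

Section GreedyProcess.
Variable V : Type.
Variable E : V -> V -> Prop.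
Variable f : V -> card.
Variable P : (V -> V -> Prop) -> (V -> card) -> Prop.
Hypothesis P_hereditary : hereditary P.
Hypothesis P_E_f : holds P E f.
Variable sched : nat -> V.

Lemma E_graph : is_graph E.
Proof. exact (proj1 (proj1 P_E_f)). Qed.

Record state : Type := State {
  residual : V -> V -> Prop;
  demand : V -> card;
  chosen : list (V * V)
}.

Definition good_choice (s : state) (x y : V) : Prop :=
  demand s y <> Fin 0 /\ residual s x y /\
  holds P (remove_edge (residual s) x y) (f_dec (demand s) x y).

Definition extend (s : state) (x y : V) : state :=
  State (remove_edge (residual s) x y) (f_dec (demand s) x y) ((x, y) :: chosen s).

Definition step (x : V) (s : state) : state :=
  if excluded_middle_informative (demand s x = Fin 0) then s
  else extend s x (epsilon (inhabits x) (good_choice s x)).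

Fixpoint run (k : nat) : state :=
  match k with 0 => State E f [] | S k => step (sched k) (run k) end.

Record consistent (s : state) : Prop := {
  consistent_holds : holds P (residual s) (demand s);
  consistent_residual : forall u v, residual s u v -> E u v /\ ~ edges_of (chosen s) u v;
  consistent_chosen : forall u v, edges_of (chosen s) u v -> E u v;
  consistent_NoDup : forall v, NoDup (neighbours v (chosen s));
  consistent_degree : forall v, card_add (demand s v) (length (neighbours v (chosen s))) = f v
}.

Lemma consistent_init : consistent (State E f []).
Proof.
  split; simpl.
  - exact P_E_f.
  - unfold edges_of; simpl; tauto.
  - unfold edges_of; simpl; tauto.
  - constructor.
  - intro v; destruct (f v); simpl; [rewrite Nat.add_0_r|]; reflexivity.
Qed.

Lemma consistent_extend s x y : consistent s -> demand s x <> Fin 0 ->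
  good_choice s x y -> consistent (extend s x y).
Proof.
  intros [Hholds Hres Hch Hnd Hdeg] x_pos [y_pos [Rxy Hxy]].
  destruct E_graph as [E_sym E_irr].
  destruct (Hres x y Rxy) as [Exy fresh].
  assert (xy : x <> y) by (intros ->; exact (E_irr y Exy)).
  split; cbn [residual demand chosen extend].
  - exact Hxy.
  - intros u v [Ruv not_xy]; rewrite edges_of_cons.
    destruct (Hres u v Ruv); tauto.
  - intros u v; rewrite edges_of_cons.
    intros [[-> ->]|[[-> ->]|h]]; auto.
  - exact (NoDup_neighbours_cons xy fresh Hnd).
  - intro v; rewrite length_neighbours_cons by exact xy; unfold f_dec.
    destruct (excluded_middle_informative (v = x \/ v = y)) as [[-> | ->]|_];
      [rewrite card_add_pred_succ; auto..|apply Hdeg].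
Qed.

Lemma consistent_step x s : consistent s -> consistent (step x s).
Proof.
  intro Hs; unfold step.
  destruct (excluded_middle_informative (demand s x = Fin 0)) as [_|x_pos]; [exact Hs|].
  apply consistent_extend; auto.
  apply epsilon_spec, P_hereditary; [exact (consistent_holds Hs)|exact x_pos].
Qed.

Lemma consistent_run k : consistent (run k).
Proof. induction k; [exact consistent_init|apply consistent_step; assumption]. Qed.

Lemma chosen_step_suffix x s : exists L, chosen (step x s) = L ++ chosen s.
Proof.
  unfold step; destruct (excluded_middle_informative _);
    [exists []|eexists [(x, _)]]; reflexivity.
Qed.

Lemma chosen_run_suffix k k' : k <= k' -> exists L, chosen (run k') = L ++ chosen (run k).
Proof.
  induction 1 as [|k' _ [L IH]]; [exists []; reflexivity|].
  destruct (chosen_step_suffix (sched k') (run k')) as [L' HL'].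
  exists (L' ++ L); simpl; rewrite HL', IH, app_assoc; reflexivity.
Qed.

Lemma neighbours_run_incl j k v y : j <= k ->
  In y (neighbours v (chosen (run j))) -> In y (neighbours v (chosen (run k))).
Proof.
  intros jk; destruct (chosen_run_suffix jk) as [L ->].
  rewrite neighbours_app; intro; apply in_or_app; auto.
Qed.

(* Once the demand of v is exhausted, the degree accounting of [consistent]
   leaves no room for a further chosen edge at v. *)
Lemma neighbours_run_saturated k k' v : demand (run k) v = Fin 0 -> k <= k' ->
  neighbours v (chosen (run k')) = neighbours v (chosen (run k)).
Proof.
  intros zero kk'; destruct (chosen_run_suffix kk') as [L HL].
  pose proof (consistent_degree (consistent_run k) v) as Dk.
  pose proof (consistent_degree (consistent_run k') v) as Dk'.
  rewrite HL, neighbours_app in Dk' |- *; rewrite length_app, <- Dk, zero in Dk'.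
  destruct (neighbours v L); [reflexivity|].
  destruct (demand (run k') v); simpl in Dk'; [injection Dk'; lia|discriminate].
Qed.

Lemma neighbours_unbounded v :
  (forall K, exists k, K <= k /\ sched k = v) -> (forall k, demand (run k) v <> Fin 0) ->
  forall N, exists k, N <= length (neighbours v (chosen (run k))).
Proof.
  intros visits pos N; induction N as [|N [k Hk]]; [exists 0; lia|].
  destruct (visits k) as [k1 [kk1 <-]].
  exists (S k1).
  assert (grow : S (length (neighbours (sched k1) (chosen (run k1))))
                 <= length (neighbours (sched k1) (chosen (run (S k1))))).
  { simpl; unfold step.
    destruct (excluded_middle_informative _) as [zero|_]; [destruct (pos k1 zero)|].
    apply length_neighbours_cons_self. }
  destruct (chosen_run_suffix kk1) as [L HL].
  rewrite HL, neighbours_app, length_app in grow; lia.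
Qed.

Definition chosen_edges (u v : V) : Prop := exists k, edges_of (chosen (run k)) u v.

Lemma chosen_edges_subset : edge_subset chosen_edges E.
Proof.
  split.
  - intros u v [k h]; exists k; unfold edges_of in *; tauto.
  - intros u v [k h]; exact (consistent_chosen (consistent_run k) h).
Qed.

Lemma demand_run_exhausted v n : (forall K, exists k, K <= k /\ sched k = v) ->
  f v = Fin n -> exists k, demand (run k) v = Fin 0.
Proof.
  intros visits fv; apply NNPP; intro never.
  destruct (neighbours_unbounded visits (fun k z => never (ex_intro _ k z)) (S n)) as [k Hk].
  pose proof (consistent_degree (consistent_run k) v) as deg; rewrite fv in deg.
  destruct (demand (run k) v); simpl in deg; [injection deg; lia|discriminate].
Qed.

Lemma demand_run_Inf v k : f v = Inf -> demand (run k) v = Inf.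
Proof.
  pose proof (consistent_degree (consistent_run k) v) as deg.
  destruct (demand (run k) v); simpl in deg; congruence.
Qed.

Lemma has_deg_chosen_edges v : (forall K, exists k, K <= k /\ sched k = v) ->
  has_deg chosen_edges v (f v).
Proof.
  intro visits; destruct (f v) as [n|] eqn:fv.
  - destruct (demand_run_exhausted visits fv) as [k0 zero].
    exists (neighbours v (chosen (run k0))); repeat split.
    + exact (consistent_NoDup (consistent_run k0) v).
    + pose proof (consistent_degree (consistent_run k0) v) as deg.
      rewrite zero, fv in deg; injection deg; lia.
    + intros [j Hj]; rewrite <- (neighbours_run_saturated v zero (Nat.le_max_r j k0)).
      apply (neighbours_run_incl v y (Nat.le_max_l j k0)), in_neighbours, Hj.
    + intro Hy; exists k0; apply in_neighbours, Hy.
  - intros [l Hl].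
    assert (pos : forall k, demand (run k) v <> Fin 0)
      by (intro k; rewrite (demand_run_Inf k fv); discriminate).
    destruct (neighbours_unbounded visits pos (S (length l))) as [k Hk].
    assert (length (neighbours v (chosen (run k))) <= length l); [|lia].
    apply NoDup_incl_length; [exact (consistent_NoDup (consistent_run k) v)|].
    intros y Hy; apply Hl; exists k; apply in_neighbours, Hy.
Qed.

End GreedyProcess.

Theorem theorem1 (V : Type) (E : V -> V -> Prop) (f : V -> card)
  (P : (V -> V -> Prop) -> (V -> card) -> Prop) :
  countably_infinite V -> inC E f -> hereditary P -> holds P E f ->
  exists F : V -> V -> Prop, edge_subset F E /\ forall x, has_deg F x (f x).
Proof.
  intros [g [_ g_onto]] _ P_hereditary P_E_f.
  exists (chosen_edges E f P (fair_schedule g)); split.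
  - exact (chosen_edges_subset P_hereditary P_E_f (fair_schedule g)).
  - intro v; apply has_deg_chosen_edges; [exact P_hereditary|exact P_E_f|].
    intro K; destruct (g_onto v) as [i <-]; apply fair_schedule_recurrent.
Qed.
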